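(* Let $X$ and $Y$ be balleans and $f:X\to Y$ an asymptotic immersion. If $Y$ is normal, then $X$ is normal.
   Context: A ballean is a pair $(X,\mathcal E_X)$ where $X$ is a set and $\mathcal E_X$ is a family of subsets of $X\times X$ (entourages) such that: each $E\in\mathcal E_X$ contains the diagonal; for any $E,F\in\mathcal E_X$ there is $D\in\mathcal E_X$ with $E\circ F^{-1}\subset D$; and $\bigcup\mathcal E_X=X\times X$. For $E\in\mathcal E_X$, $x\in X$, $A\subset X$: $E[x]=\{y:(x,y)\in E\}$, $E[A]=\bigcup_{a\in A}E[a]$. $B\subset X$ is bounded if $B\subset E[x]$ for some $E\in\mathcal E_X$, $x\in X$; $\mathcal B_X$ is the family of bounded sets. Sets $A,B$ are asymptotically disjoint if $E[A]\cap E[B]\in\mathcal B_X$ for all $E\in\mathcal E_X$; $U$ is an asymptotic neighborhood of $A$ if $E[A]\setminus U\in\mathcal B_X$ for all $E$; $X$ is normal if any two asymptotically disjoint sets have disjoint asymptotic neighborhoods. A map $f:X\to Y$ is macro-uniform if for every $E_X\in\mathcal E_X$ there is $E_Y\in\mathcal E_Y$ with $f(E_X[x])\subset E_Y[f(x)]$ for all $x\in X$; proper if $f^{-1}(B)$ is bounded in $X$ for every bounded $B\subset Y$; and an asymptotic immersion if it is proper, macro-uniform, and $f(A),f(B)$ are asymptotically disjoint in $Y$ whenever $A,B$ are asymptotically disjoint in $X$. *)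

Set Implicit Arguments.

Definition rel (X : Type) := X -> X -> Prop.

Definition rcomp {X : Type} (E F : rel X) : rel X :=
  fun x z => exists y, E x y /\ F y z.
Definition rinv {X : Type} (E : rel X) : rel X := fun x y => E y x.
Definition rsub {X : Type} (E F : rel X) : Prop := forall x y, E x y -> F x y.

Record Ballean := {
  carrier :> Type;
  ent : rel carrier -> Prop;
  ent_diag : forall E, ent E -> forall x, E x x;
  ent_comp : forall E F, ent E -> ent F ->
               exists D, ent D /\ rsub (rcomp E (rinv F)) D;
  ent_cover : forall x y, exists E, ent E /\ E x y
}.

Definition ball {X : Ballean} (E : rel X) (x : X) : X -> Prop := fun y => E x y.
Definition ballS {X : Ballean} (E : rel X) (A : X -> Prop) : X -> Prop :=
  fun y => exists a, A a /\ E a y.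

Definition subset {T : Type} (A B : T -> Prop) := forall x, A x -> B x.

Definition bounded {X : Ballean} (B : X -> Prop) : Prop :=
  exists E x, ent X E /\ subset B (ball E x).

Definition asym_disjoint {X : Ballean} (A B : X -> Prop) : Prop :=
  forall E, ent X E -> bounded (fun y => ballS E A y /\ ballS E B y).

Definition asym_nbhd {X : Ballean} (U A : X -> Prop) : Prop :=
  forall E, ent X E -> bounded (fun y => ballS E A y /\ ~ U y).

Definition normal (X : Ballean) : Prop :=
  forall A B : X -> Prop, asym_disjoint A B ->
    exists U V : X -> Prop, asym_nbhd U A /\ asym_nbhd V B /\
      (forall x, U x -> V x -> False).

Definition image {X Y : Type} (f : X -> Y) (A : X -> Prop) : Y -> Prop :=
  fun y => exists x, A x /\ f x = y.

Definition macro_uniform {X Y : Ballean} (f : X -> Y) : Prop :=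
  forall EX, ent X EX -> exists EY, ent Y EY /\
    forall x, subset (image f (ball EX x)) (ball EY (f x)).

Definition proper {X Y : Ballean} (f : X -> Y) : Prop :=
  forall B : Y -> Prop, bounded B -> bounded (fun x => B (f x)).

Definition asymptotic_immersion {X Y : Ballean} (f : X -> Y) : Prop :=
  proper f /\ macro_uniform f /\
  (forall A B : X -> Prop, asym_disjoint A B ->
     asym_disjoint (image f A) (image f B)).


Set Implicit Arguments.

(* If [A] and [B] are asymptotically disjoint in [X], their images are so in
   [Y]; separate them there by disjoint asymptotic neighborhoods [U], [V] and
   pull these back along [f].  Macro-uniformity maps [E[A]] into [E'[f(A)]],
   so [E[A] \ f^-1(U)] lies in the preimage of the bounded set
   [E'[f(A)] \ U], which is bounded by properness. *)

Lemma bounded_subset (X : Ballean) (A B : X -> Prop) :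
  subset A B -> bounded B -> bounded A.
Proof.
  intros HAB [E [x [HE HB]]].
  exists E, x; split; [exact HE |].
  intros y Hy; apply HB, HAB, Hy.
Qed.

Lemma macro_uniform_ballS (X Y : Ballean) (f : X -> Y) (EX : rel X) (EY : rel Y)
    (A : X -> Prop) :
  (forall x, subset (image f (ball EX x)) (ball EY (f x))) ->
  forall y, ballS EX A y -> ballS EY (image f A) (f y).
Proof.
  intros Hf y [a [Ha Hay]].
  exists (f a); split.
  - exists a; split; [exact Ha | reflexivity].
  - apply (Hf a); exists y; split; [exact Hay | reflexivity].
Qed.

Lemma asym_nbhd_preimage (X Y : Ballean) (f : X -> Y)
    (A : X -> Prop) (U : Y -> Prop) :
  proper f -> macro_uniform f -> asym_nbhd U (image f A) ->
  asym_nbhd (fun x => U (f x)) A.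
Proof.
  intros Hproper Hmacro HU E HE.
  destruct (Hmacro E HE) as [E' [HE' Hball]].
  apply bounded_subset
    with (B := fun x => ballS E' (image f A) (f x) /\ ~ U (f x)).
  - intros y [HyA HyU]; split; [| exact HyU].
    exact (macro_uniform_ballS Hball HyA).
  - exact (Hproper _ (HU E' HE')).
Qed.

Theorem proposition2p1 (X Y : Ballean) (f : X -> Y) :
  asymptotic_immersion f -> normal Y -> normal X.
Proof.
  intros [Hproper [Hmacro Hdisj]] HY A B HAB.
  destruct (HY _ _ (Hdisj A B HAB)) as [U [V [HU [HV HUV]]]].
  exists (fun x => U (f x)), (fun x => V (f x)).
  split; [| split].
  - exact (asym_nbhd_preimage Hproper Hmacro HU).
  - exact (asym_nbhd_preimage Hproper Hmacro HV).
  - intros x HUx HVx; exact (HUV (f x) HUx HVx).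
Qed.
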